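(* Let $R$ be a commutative ring and $S$ a finite multiplicative subset of $R$. The following are equivalent: (1) $R$ is a $u$-$S$-coherent ring; (2) $R$ is an $S$-coherent ring; (3) $R$ is a $c$-$S$-coherent ring.
   Context: A multiplicative subset $S$ contains $1$ and is closed under products. $M$ is $S$-finite if there are $s\in S$ and a finitely generated submodule $F\subseteq M$ with $sM\subseteq F$ (with respect to $s$). $M$ is $u$-$S$-finitely presented with respect to $s$ if there is an exact sequence $0\to T_1\to F\to M\to T_2\to 0$ with $F$ finitely presented and $sT_1=sT_2=0$. $R$ is $u$-$S$-coherent if there is $s\in S$ such that $R$ is $S$-finite with respect to $s$ and every finitely generated ideal is $u$-$S$-finitely presented with respect to $s$. $M$ is $S$-finitely presented if there is an exact sequence $0\to K\to F\to M\to 0$ with $F$ finitely generated free and $K$ $S$-finite; $M$ is $c$-$S$-finitely presented if there are $s\in S$ and a finitely presented submodule $N\subseteq M$ with $sM\subseteq N$. $R$ is $S$-coherent (resp. $c$-$S$-coherent) if every finitely generated ideal of $R$ is $S$-finitely presented (resp. $c$-$S$-finitely presented). *)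

From HB Require Import structures.
From mathcomp Require Import all_boot all_order all_algebra.
Set Implicit Arguments. Unset Strict Implicit. Unset Printing Implicit Defensive.
Import GRing.Theory.
Local Open Scope ring_scope.

(* Modules over a commutative ring R are MathComp's [lmodType R]; the ring R
   itself as a module is the regular module [R^o]; the finitely generated
   free module R^n is ['rV[R]_n]. *)

Section Defs.
Variable R : comPzRingType.

Definition surj (A B : Type) (f : A -> B) : Prop := forall y, exists x, f x = y.

Definition in_span (M : lmodType R) (g : seq M) (x : M) : Prop :=
  exists c : 'I_(size g) -> R, x = \sum_(i < size g) c i *: g`_i.

Definition is_submod (M : lmodType R) (N : M -> Prop) : Prop :=
  N 0 /\ forall (a : R) (u v : M), N u -> N v -> N (a *: u + v).

Definition fg_sub (M : lmodType R) (N : M -> Prop) : Prop :=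
  exists g : seq M, forall x, N x <-> in_span g x.

Definition fin_gen (M : lmodType R) : Prop := fg_sub (fun _ : M => True).

Definition fin_pres (M : lmodType R) : Prop :=
  exists (n : nat) (f : {linear 'rV[R]_n -> M}),
    surj f /\ fg_sub (fun x => f x = 0).

Definition S_finite_sub_wrt (M : lmodType R) (N : M -> Prop) (s : R) : Prop :=
  exists F : M -> Prop, is_submod F /\ fg_sub F /\ (forall x, F x -> N x) /\
    (forall x, N x -> F (s *: x)).

Definition S_finite_wrt (M : lmodType R) (s : R) : Prop :=
  S_finite_sub_wrt (fun _ : M => True) s.

Definition multiplicative (S : R -> Prop) : Prop :=
  S 1 /\ forall a b, S a -> S b -> S (a * b).

Definition finite_subset (S : R -> Prop) : Prop :=
  exists l : seq R, forall x, S x -> x \in l.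

(* u-S-finitely presented with respect to s:
   exact 0 -> T1 -> F -> M -> T2 -> 0, F finitely presented, s T1 = s T2 = 0 *)
Definition u_S_fin_pres_wrt (M : lmodType R) (s : R) : Prop :=
  exists (F T1 T2 : lmodType R) (i : {linear T1 -> F}) (g : {linear F -> M})
         (p : {linear M -> T2}),
    fin_pres F /\
    injective i /\
    (forall x : F, g x = 0 <-> exists t, x = i t) /\
    (forall m : M, p m = 0 <-> exists x, m = g x) /\
    surj p /\
    (forall t : T1, s *: t = 0) /\ (forall t : T2, s *: t = 0).

Definition S_fin_pres (S : R -> Prop) (M : lmodType R) : Prop :=
  exists (n : nat) (f : {linear 'rV[R]_n -> M}),
    surj f /\ exists s, S s /\ S_finite_sub_wrt (fun x => f x = 0) s.

(* c-S-finitely presented: a finitely presented submodule N of M (given as an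
   injective linear map N -> M) with s M contained in N *)
Definition c_S_fin_pres (S : R -> Prop) (M : lmodType R) : Prop :=
  exists s, S s /\ exists (N : lmodType R) (j : {linear N -> M}),
    injective j /\ fin_pres N /\ forall m : M, exists y, s *: m = j y.

(* M is (isomorphic to) a finitely generated ideal of R: M embeds into R
   linearly, with image a finitely generated ideal *)
Definition fg_ideal (M : lmodType R) : Prop :=
  exists j : {linear M -> R^o}, injective j /\ fg_sub (fun r => exists x, j x = r).

Definition u_S_coherent (S : R -> Prop) : Prop :=
  exists s, S s /\ S_finite_wrt R^o s /\
    forall M : lmodType R, fg_ideal M -> u_S_fin_pres_wrt M s.

Definition S_coherent (S : R -> Prop) : Prop :=
  forall M : lmodType R, fg_ideal M -> S_fin_pres S M.

Definition c_S_coherent (S : R -> Prop) : Prop :=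
  forall M : lmodType R, fg_ideal M -> c_S_fin_pres S M.

End Defs.

From HB Require Import structures.
From mathcomp Require Import all_boot all_order all_algebra.
From Pilot Require Import Defs.
From Stdlib Require Import Classical.
Set Implicit Arguments. Unset Strict Implicit. Unset Printing Implicit Defensive.
Import GRing.Theory.
Local Open Scope ring_scope.

(* A finite multiplicative set S contains an idempotent e that is a multiple
   of all its elements, so e kills every module killed by some s in S.  For a
   finitely generated ideal I = eI + (1 - e)I, each of the three notions of
   finite presentation then amounts to eI being finitely presented: the
   torsion modules T1, T2 and the defect of an S-finite kernel are killed by
   e, while conversely eI is a submodule of I with cokernel (1 - e)I. *)

Section Span.
Variable R : comPzRingType.

Section OneModule.
Variable M : lmodType R.
Implicit Types (g : seq M) (x y : M).

Lemma span0 g : in_span g 0.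
Proof. by exists (fun _ => 0); rewrite big1 // => i _; rewrite scale0r. Qed.

Lemma spanD g x y : in_span g x -> in_span g y -> in_span g (x + y).
Proof.
move=> [c1 ->] [c2 ->]; exists (fun i => c1 i + c2 i).
by rewrite -big_split; apply: eq_bigr => i _; rewrite scalerDl.
Qed.

Lemma spanZ g a x : in_span g x -> in_span g (a *: x).
Proof.
move=> [c ->]; exists (fun i => a * c i).
by rewrite scaler_sumr; apply: eq_bigr => i _; rewrite scalerA.
Qed.

Lemma span_submod g : is_submod (in_span g).
Proof.
by split=> [|a u v hu hv]; [exact: span0 | apply: spanD => //; apply: spanZ].
Qed.

Lemma span_mem g y : y \in g -> in_span g y.
Proof.
move=> gy; have iy : (index y g < size g)%N by rewrite index_mem.
exists (fun j : 'I_(size g) => (j == Ordinal iy)%:R).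
rewrite (bigD1 (Ordinal iy)) //= eqxx scale1r nth_index // big1 ?addr0 //.
by move=> j /negPf ->; rewrite scale0r.
Qed.

Lemma span_comb g n (c : 'I_n -> R) (y : 'I_n -> M) :
  (forall i, in_span g (y i)) -> in_span g (\sum_i c i *: y i).
Proof.
move=> h; apply: (big_ind (in_span g)); [exact: span0 | exact: spanD |].
by move=> i _; apply: spanZ.
Qed.

Lemma span_sub g1 g2 x :
  {subset g1 <= g2} -> in_span g1 x -> in_span g2 x.
Proof.
by move=> sub [c ->]; apply: span_comb => i; apply/span_mem/sub/mem_nth.
Qed.

Lemma span_scale g a x : in_span g x -> in_span (map ( *:%R a) g) (a *: x).
Proof.
move=> [c ->]; rewrite scaler_sumr.
under eq_bigr do rewrite scalerA mulrC -scalerA.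
by apply: span_comb => i; apply/span_mem/map_f/mem_nth.
Qed.

End OneModule.

Lemma span_map (M N : lmodType R) (f : {linear M -> N}) g x :
  in_span g x -> in_span (map f g) (f x).
Proof.
move=> [c ->]; rewrite linear_sum; under eq_bigr do rewrite linearZ.
by apply: span_comb => i; apply/span_mem/map_f/mem_nth.
Qed.

Lemma span_ker (M N : lmodType R) (f : {linear M -> N}) g x :
  {in g, forall y, f y = 0} -> in_span g x -> f x = 0.
Proof.
move=> h [c ->]; rewrite linear_sum big1 // => i _.
by rewrite linearZ /= h ?scaler0 // mem_nth.
Qed.

End Span.

Section LinComb.
Variables (R : comPzRingType) (M : lmodType R) (n : nat) (v : 'I_n -> M).

Definition lincomb (c : 'rV[R]_n) : M := \sum_i c 0 i *: v i.

Lemma lincomb_is_linear : linear lincomb.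
Proof.
move=> a x y; rewrite /lincomb scaler_sumr -big_split /=.
by apply: eq_bigr => i _; rewrite !mxE scalerDl scalerA.
Qed.
HB.instance Definition _ :=
  GRing.isLinear.Build R 'rV[R]_n M *:%R lincomb lincomb_is_linear.

End LinComb.

Lemma linear_row_delta (R : comPzRingType) (V : lmodType R) n
    (phi : {linear 'rV[R]_n -> V}) c :
  phi c = \sum_i c 0 i *: phi (delta_mx 0 i).
Proof.
rewrite {1}(row_sum_delta c) linear_sum.
by apply: eq_bigr => i _; rewrite linearZ.
Qed.

(* For an idempotent [e], the submodule [eM] of [M] is realised as the set of
   fixed points of [m |-> e *: m]. *)
Section EMod.
Variables (R : comPzRingType) (M : lmodType R) (e : R).

Definition fixed_by : {pred M} := fun m => e *: m == m.

Lemma fixed_by_submod_closed : submod_closed fixed_by.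
Proof.
split=> [|a x y]; rewrite !unfold_in /= ?scaler0 //.
by move=> /eqP hx /eqP hy; rewrite scalerDr scalerA mulrC -scalerA hx hy.
Qed.
HB.instance Definition _ :=
  GRing.isSubmodClosed.Build R M fixed_by fixed_by_submod_closed.

Inductive emod := EMod x of x \in fixed_by.
Definition emod_val u := let: EMod x _ := u in x.
HB.instance Definition _ := [isSub for emod_val].
HB.instance Definition _ := [Choice of emod by <:].
HB.instance Definition _ := [SubChoice_isSubLmodule of emod by <:].

Lemma emod_valK (x : emod) : e *: val x = val x.
Proof. by case: x => y /=; rewrite unfold_in => /eqP. Qed.

Hypothesis e_idem : e * e = e.

Lemma scale_fixed_by (m : M) : e *: m \in fixed_by.
Proof. by rewrite unfold_in /= scalerA e_idem. Qed.

Definition emod_proj (m : M) : emod := EMod (scale_fixed_by m).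

Lemma emod_proj_is_linear : linear emod_proj.
Proof. by move=> a x y; apply: val_inj; rewrite /= linearP. Qed.
HB.instance Definition _ :=
  GRing.isLinear.Build R M emod *:%R emod_proj emod_proj_is_linear.

Lemma emod_proj_eq0 (m : M) : emod_proj m = 0 <-> e *: m = 0.
Proof. by split=> [/(congr1 val) | h]; last apply: val_inj. Qed.

Lemma emod_projK (x : emod) : emod_proj (val x) = x.
Proof. by apply: val_inj; rewrite /= emod_valK. Qed.

End EMod.

Section Idempotent.
Variables (R : comPzRingType) (S : R -> Prop) (HS : Defs.multiplicative S).

Lemma multiplicative_common_multiple (l : seq R) :
  exists2 s, S s & forall t, S t -> t \in l -> exists2 u, S u & s = u * t.
Proof.
have [S1 SM] := HS.
elim: l => [|x l [s Ss IH]]; first by exists 1.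
have [Sx | nSx] := classic (S x).
- exists (s * x) => [|t St]; first exact: SM.
  rewrite in_cons => /predU1P [-> | tl]; first by exists s.
  have [u Su ->] := IH t St tl; exists (u * x); first exact: SM.
  by rewrite mulrAC.
- exists s => // t St; rewrite in_cons => /predU1P [tx | tl]; last exact: IH.
  by rewrite tx in St.
Qed.

(* If [s] is a multiple of every element of [S], then so is [e := s * u],
   where [s = u * s ^+ 2] because [s ^+ 2] lies in [S]. *)
Lemma finite_multiplicative_idempotent : finite_subset S ->
  exists e, [/\ S e, e * e = e & forall t, S t -> exists u, e = u * t].
Proof.
move=> [l Sl]; have [S1 SM] := HS.
have [s Ss s_mul] := multiplicative_common_multiple l.
have Sss : S (s * s) by apply: SM.
have [u Su s_eq] := s_mul _ Sss (Sl _ Sss).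
exists (s * u); split; first exact: SM.
- by rewrite mulrACA mulrA [s * s * u]mulrC -s_eq.
- move=> t St; have [v _ ->] := s_mul _ St (Sl _ St).
  by exists (v * u); rewrite mulrAC.
Qed.

End Idempotent.

Section EModPresentation.
Variables (R : comPzRingType) (e : R).
Hypothesis e_idem : e * e = e.

Lemma fin_pres_emod_of_map (X : lmodType R) n (f : {linear 'rV[R]_n -> X})
    (G : seq 'rV[R]_n) :
    (forall x, exists c, f c = e *: x) ->
    (forall c, in_span G c -> f c = 0) ->
    (forall c, f c = 0 -> in_span G (e *: c)) ->
  fin_pres (emod X e).
Proof.
move=> f_onto G_ker ker_G.
exists n, (emod_proj e_idem \o f); split.
  move=> y; have [c fc] := f_onto (val y).
  by exists c; apply: val_inj; rewrite /= fc !emod_valK.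
(* The kernel of [c |-> e *: f c] is spanned by the [(1 - e) *: delta_i] and
   the [e *: G]. *)
pose G' := [seq (1 - e) *: delta_mx 0 i | i <- enum 'I_n] ++ map ( *:%R e) G.
exists G' => c; split.
- move=> /emod_proj_eq0; rewrite -linearZ => /ker_G /(span_scale e) eG.
  rewrite !scalerA !e_idem in eG.
  rewrite -[c](subrK (e *: c)) -{1}[c]scale1r -scalerBl addrC.
  apply: spanD.
    by apply: (span_sub _ eG) => y Gy; rewrite mem_cat Gy orbT.
  rewrite {1}(row_sum_delta c) scaler_sumr.
  under eq_bigr do rewrite scalerA mulrC -scalerA.
  apply: span_comb => i; apply/span_mem; rewrite mem_cat; apply/orP; left.
  by apply: (map_f (fun i => (1 - e) *: delta_mx 0 i)); rewrite mem_enum.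
- apply: span_ker => y; rewrite mem_cat => /orP [/mapP [i _ ->] | /mapP [z Gz ->]].
  all: apply/emod_proj_eq0; rewrite -linearZ scalerA.
  + by rewrite mulrBr mulr1 e_idem subrr scale0r linear0.
  + by rewrite e_idem linearZ /= G_ker ?scaler0 //; apply: span_mem.
Qed.

Lemma kernel_S_finite_of_fin_pres_emod (M : lmodType R) n
    (f : {linear 'rV[R]_n -> M}) :
  surj f -> fin_pres (emod M e) -> S_finite_sub_wrt (fun c => f c = 0) e.
Proof.
move=> f_onto [k [h [h_onto [G hG]]]].
have [a ha] :=
  fin_all_exists (fun i => h_onto (emod_proj e_idem (f (delta_mx 0 i)))).
have [b hb] := fin_all_exists (fun l => f_onto (val (h (delta_mx 0 l)))).
(* [alpha] lifts [e f] through [h] and [beta] lifts [h] through [f]; up to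
   [e], the kernel of [f] is spanned by [beta G] and the images of the basis
   under [1 - beta alpha]. *)
pose alpha := lincomb a; pose beta := lincomb b.
have h_alpha c : h (alpha c) = emod_proj e_idem (f c).
  rewrite linear_sum [RHS](linear_row_delta (emod_proj e_idem \o f)).
  by apply: eq_bigr => i _; rewrite linearZ /= ha.
have f_beta d : f (beta d) = val (h d).
  rewrite linear_sum [RHS](linear_row_delta (val \o h)).
  by apply: eq_bigr => l _; rewrite linearZ /= hb.
pose G1 := [seq e *: (delta_mx 0 i - beta (alpha (delta_mx 0 i))) | i <- enum 'I_n].
exists (in_span (G1 ++ map beta G)); split; first exact: span_submod.
split; first by exists (G1 ++ map beta G).
split=> c.
- apply: span_ker => y; rewrite mem_cat => /orP [/mapP [i _ ->] | /mapP [z Gz ->]].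
  + by rewrite linearZ linearB /= f_beta h_alpha /= scalerBr scalerA e_idem subrr.
  + by rewrite f_beta (proj2 (hG z) (span_mem Gz)).
- move=> fc0; have /hG alpha_c : h (alpha c) = 0.
    by rewrite h_alpha; apply/emod_proj_eq0; rewrite fc0 scaler0.
  rewrite -[e *: c](subrK (e *: beta (alpha c))) -scalerBr.
  apply: spanD; last first.
    apply/spanZ/(span_sub _ (span_map beta alpha_c)) => y y_in.
    by rewrite mem_cat y_in orbT.
  have -> : e *: (c - beta (alpha c)) =
      \sum_i c 0 i *: (e *: (delta_mx 0 i - beta (alpha (delta_mx 0 i)))).
    rewrite [beta (alpha c)](linear_row_delta (beta \o alpha)) {1}(row_sum_delta c).
    rewrite -sumrB scaler_sumr; apply: eq_bigr => i _.
    by rewrite -scalerBr scalerA mulrC -scalerA.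
  apply: span_comb => i; apply: span_mem; rewrite mem_cat; apply/orP; left.
  apply: (map_f (fun i => e *: (delta_mx 0 i - beta (alpha (delta_mx 0 i))))).
  by rewrite mem_enum.
Qed.

Lemma u_S_fin_pres_of_fin_pres_emod (M : lmodType R) :
  fin_pres (emod M e) -> u_S_fin_pres_wrt M e.
Proof.
move=> eM_fp.
have e'_idem : (1 - e) * (1 - e) = 1 - e.
  by rewrite mulrBr mulr1 mulrBl mul1r e_idem subrr subr0.
exists (emod M e), 'rV[R]_0, (emod M (1 - e)), \0, val, (emod_proj e'_idem).
do !split=> //.
- by move=> x y _; rewrite (thinmx0 x) (thinmx0 y).
- by move=> x0; exists 0; apply: val_inj; rewrite x0.
- by move=> [t ->].
- rewrite emod_proj_eq0 scalerBl scale1r => /subr0_eq m_eq.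
  by exists (emod_proj e_idem m).
- by move=> [x ->]; apply/emod_proj_eq0; rewrite scalerBl scale1r emod_valK subrr.
- by move=> y; exists (val y); apply: emod_projK.
- by move=> t; rewrite (thinmx0 t) scaler0.
- move=> t; apply: val_inj => /=.
  by rewrite -(emod_valK t) scalerA mulrBr mulr1 e_idem subrr scale0r.
Qed.

End EModPresentation.

Lemma fg_ideal_quotient_of_free (R : comPzRingType) (M : lmodType R) :
  fg_ideal M -> exists n (f : {linear 'rV[R]_n -> M}), surj f.
Proof.
move=> [j [j_inj [g hg]]].
have /fin_all_exists [m hm] : forall i : 'I_(size g), exists x, j x = g`_i.
  by move=> i; apply/hg/span_mem/mem_nth.
exists (size g), (lincomb m) => y.
have [c jy] : in_span g (j y) by apply/hg; exists y.
exists (\row_i c i); apply: j_inj.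
by rewrite jy linear_sum; apply: eq_bigr => i _; rewrite linearZ hm mxE.
Qed.

Lemma S_finite_regular (R : comPzRingType) (s : R) : S_finite_wrt R^o s.
Proof.
exists (fun _ => True); do !split => //.
exists [:: (1 : R^o)] => x; split => // _.
by exists (fun _ => x); rewrite big_ord1 [RHS]/GRing.scale /= mulr1.
Qed.

Section FinitePresentations.
Variables (R : comPzRingType) (S : R -> Prop) (e : R).
Hypotheses (Se : S e) (e_idem : e * e = e).
Hypothesis e_multiple : forall t, S t -> exists u, e = u * t.

Lemma fin_pres_emod_of_S_fin_pres (M : lmodType R) :
  S_fin_pres S M -> fin_pres (emod M e).
Proof.
move=> [n [f [f_onto [t [St [F [_ [[G hG] [F_ker ker_F]]]]]]]]].
have [u e_eq] := e_multiple St.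
apply: (fin_pres_emod_of_map e_idem (f := f) (G := G)).
- by move=> m; have [c fc] := f_onto (e *: m); exists c.
- by move=> c /hG /F_ker.
- by move=> c /ker_F /hG /(spanZ u); rewrite scalerA -e_eq.
Qed.

Lemma fin_pres_emod_of_c_S_fin_pres (M : lmodType R) :
  c_S_fin_pres S M -> fin_pres (emod M e).
Proof.
move=> [s [Ss [N [j [j_inj [[k [h [h_onto [G hG]]]] sM_in]]]]]].
have [u e_eq] := e_multiple Ss.
apply: (fin_pres_emod_of_map e_idem (f := j \o h) (G := G)).
- move=> m; have [y jy] := sM_in m; have [c hc] := h_onto y.
  by exists (u *: c); rewrite /= !linearZ /= hc -jy scalerA -e_eq.
- by move=> c /hG /= ->; rewrite linear0.
- move=> c /= jhc0; apply/spanZ/hG/j_inj.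
  by rewrite jhc0 linear0.
Qed.

Lemma fin_pres_emod_of_u_S_fin_pres (M : lmodType R) s :
  S s -> u_S_fin_pres_wrt M s -> fin_pres (emod M e).
Proof.
move=> Ss [F [T1 [T2 [i [g [p [[k [h [h_onto [G hG]]]] exact_seq]]]]]]].
have [_ [g_ker [p_ker [_ [sT1 sT2]]]]] := exact_seq.
have [u e_eq] := e_multiple Ss.
apply: (fin_pres_emod_of_map e_idem (f := g \o h) (G := G)).
- move=> m; have /p_ker [x ->] : p (e *: m) = 0.
    by rewrite linearZ /= e_eq -scalerA sT2 scaler0.
  by have [c <-] := h_onto x; exists c.
- by move=> c /hG /= ->; rewrite linear0.
- move=> c /= /g_ker [t ht]; apply/hG.
  by rewrite linearZ /= ht -linearZ e_eq -scalerA sT1 scaler0 linear0.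
Qed.

Lemma c_S_fin_pres_of_fin_pres_emod (M : lmodType R) :
  fin_pres (emod M e) -> c_S_fin_pres S M.
Proof.
move=> eM_fp; exists e; split=> //; exists (emod M e), val.
by split; [exact: val_inj | split=> // m; exists (emod_proj e_idem m)].
Qed.

Lemma S_fin_pres_of_fin_pres_emod (M : lmodType R) :
  fg_ideal M -> fin_pres (emod M e) -> S_fin_pres S M.
Proof.
move=> /fg_ideal_quotient_of_free [n [f f_onto]] eM_fp.
exists n, f; split=> //; exists e; split=> //.
exact: kernel_S_finite_of_fin_pres_emod.
Qed.

Lemma u_S_coherent_iff_emod :
  u_S_coherent S <-> forall M : lmodType R, fg_ideal M -> fin_pres (emod M e).
Proof.
split=> [[s [Ss [_ u_fp]]] M fgM | eM_fp].
  exact: fin_pres_emod_of_u_S_fin_pres Ss (u_fp M fgM).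
exists e; split=> //; split; first exact: S_finite_regular.
by move=> M fgM; apply/u_S_fin_pres_of_fin_pres_emod/eM_fp.
Qed.

Lemma S_coherent_iff_emod :
  S_coherent S <-> forall M : lmodType R, fg_ideal M -> fin_pres (emod M e).
Proof.
split=> [S_fp M fgM | eM_fp M fgM].
  exact/fin_pres_emod_of_S_fin_pres/S_fp.
exact/S_fin_pres_of_fin_pres_emod/eM_fp.
Qed.

Lemma c_S_coherent_iff_emod :
  c_S_coherent S <-> forall M : lmodType R, fg_ideal M -> fin_pres (emod M e).
Proof.
split=> [c_fp M fgM | eM_fp M fgM].
  exact/fin_pres_emod_of_c_S_fin_pres/c_fp.
exact/c_S_fin_pres_of_fin_pres_emod/eM_fp.
Qed.

End FinitePresentations.

Theorem proposition3p13 (R : comPzRingType) (S : R -> Prop)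
  (HS : Defs.multiplicative S) (Hfin : finite_subset S) :
  (u_S_coherent S <-> S_coherent S) /\ (S_coherent S <-> c_S_coherent S).
Proof.
have [e [Se e_idem e_multiple]] := finite_multiplicative_idempotent HS Hfin.
have u_iff := u_S_coherent_iff_emod Se e_idem e_multiple.
have S_iff := S_coherent_iff_emod Se e_idem e_multiple.
have c_iff := c_S_coherent_iff_emod Se e_idem e_multiple.
by split; [rewrite u_iff S_iff | rewrite S_iff c_iff].
Qed.
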